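(* Let $(X,d)$ be a ubiquitously amenable and uniformly locally finite extended metric space. Then for all $r,\varepsilon>0$ there exists $S>0$ such that for every finite nonempty $M\subseteq X$ there is a finite set $F$ with $M\subseteq F\subseteq\bar B(M,S)$ and $|\partial^+_rF|\le\varepsilon|F|$.
   Context: An extended metric may take the value $\infty$. $\bar B(A,R)=\{x:d(x,A)\le R\}$. $(X,d)$ is uniformly locally finite if $\sup_{x\in X}|\bar B(x,R)|<\infty$ for every $R>0$. Outer boundary: $\partial^+_RA=\{x\in X\setminus A:d(x,A)\le R\}$; $R$-boundary: $\partial_RA=\{x\in X:d(x,A)\le R\text{ and }d(x,X\setminus A)\le R\}$. A finite nonempty $F$ is $(R,\varepsilon)$-Følner if $|\partial_RF|\le\varepsilon|F|$. $(X,d)$ is ubiquitously amenable if for all $R,\varepsilon>0$ there is $S>0$ such that every ball $\bar B(x,S)$, $x\in X$, contains an $(R,\varepsilon)$-Følner set. *)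

(* concrete reals R, extended distances as option R (None = +oo). *)
From Stdlib Require Import Reals List.
Import ListNotations.
Open Scope R_scope.

Definition ele (v : option R) (r : R) : Prop :=
  match v with Some a => a <= r | None => False end.
Definition elt (v : option R) (r : R) : Prop :=
  match v with Some a => a < r | None => False end.
Definition eadd (u v : option R) : option R :=
  match u, v with Some a, Some b => Some (a + b) | _, _ => None end.
Definition ele2 (u v : option R) : Prop :=
  match u, v with
  | Some a, Some b => a <= b
  | _, None => True
  | None, Some _ => False
  end.

Record ext_metric (X : Type) (d : X -> X -> option R) : Prop := {
  em_nonneg : forall x y a, d x y = Some a -> 0 <= a;
  em_refl : forall x, d x x = Some 0;
  em_sep : forall x y, d x y = Some 0 -> x = y;
  em_sym : forall x y, d x y = d y x;
  em_tri : forall x y z, ele2 (d x z) (eadd (d x y) (d y z))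
}.

(* Subsets of X are predicates; "d(x,A) <= r" means inf_{a in A} d(x,a) <= r *)
Definition dist_le {X} (d : X -> X -> option R) (x : X) (A : X -> Prop) (r : R) : Prop :=
  forall e, 0 < e -> exists a, A a /\ elt (d x a) (r + e).

Definition card_le {X} (A : X -> Prop) (n : R) : Prop :=
  forall L : list X, NoDup L -> (forall x, In x L -> A x) -> INR (length L) <= n.

(* Finite sets are represented by duplicate-free lists; |F| = length F. *)
Definition closed_ball {X} (d : X -> X -> option R) (x : X) (R0 : R) : X -> Prop :=
  fun y => ele (d y x) R0.

Definition unif_loc_finite {X} (d : X -> X -> option R) : Prop :=
  forall R0, 0 < R0 -> exists N : nat, forall x, card_le (closed_ball d x R0) (INR N).

Definition outer_boundary {X} (d : X -> X -> option R) (R0 : R) (F : list X) : X -> Prop :=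
  fun x => ~ In x F /\ dist_le d x (fun y => In y F) R0.

Definition boundary {X} (d : X -> X -> option R) (R0 : R) (F : list X) : X -> Prop :=
  fun x => dist_le d x (fun y => In y F) R0 /\ dist_le d x (fun y => ~ In y F) R0.

Definition folner {X} (d : X -> X -> option R) (R0 eps : R) (F : list X) : Prop :=
  NoDup F /\ F <> [] /\ card_le (boundary d R0 F) (eps * INR (length F)).

Definition ubiq_amenable {X} (d : X -> X -> option R) : Prop :=
  forall R0 eps, 0 < R0 -> 0 < eps -> exists S, 0 < S /\
    forall x, exists F, folner d R0 eps F /\ (forall y, In y F -> closed_ball d x S y).

From Stdlib Require Import Reals List Lra Lia Classical IndefiniteDescription.
Import ListNotations.
Open Scope R_scope.

(* Let N0, N1 bound the sizes of r-balls and s-balls, where every s-ball contains an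
   (r, eps/2)-Følner set, and pick J with 2 N0 N1 < eps (1+eps)^J.  Let E_j be the
   closed (j r)-neighbourhood of M; its outer r-boundary lies in E_(j+1) minus E_j.
   - If |E_(j+1)| <= (1+eps)|E_j| for some j < J, then F = E_j works.
   - Otherwise |E_J| >= (1+eps)^J |E_0|.  Greedily choose disjoint Følner sets near
     the points of E_J until E_J lies in the s-neighbourhood of their union U; then
     |E_J| <= N1 |U| and |∂⁺U| <= (eps/2)|U|, so F = M ∪ U satisfies
     |∂⁺F| <= N0 |M| + (eps/2)|U| <= eps |F|. *)

Lemma card_le_mono {X} (A B : X -> Prop) (c : R) :
  (forall x, A x -> B x) -> card_le B c -> card_le A c.
Proof. intros HAB HB L HL HLA. apply HB; auto. Qed.

Lemma card_le_weaken {X} (A : X -> Prop) (c c' : R) :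
  c <= c' -> card_le A c -> card_le A c'.
Proof. intros Hc HA L HL HLA. specialize (HA L HL HLA). lra. Qed.

Lemma split_list {X} (A B : X -> Prop) (L : list X) :
  NoDup L -> (forall x, In x L -> A x \/ B x) ->
  exists L1 L2, NoDup L1 /\ NoDup L2 /\
    (forall x, In x L1 -> A x /\ In x L) /\ (forall x, In x L2 -> B x /\ In x L) /\
    length L = (length L1 + length L2)%nat.
Proof.
  induction L as [|a L IH]; intros HN HL.
  - exists [], []. split; [constructor|]. split; [constructor|].
    split; [intros x []|]. split; [intros x []|]. reflexivity.
  - inversion HN as [|a0 l0 Hnot HN']; subst a0 l0.
    destruct IH as (L1 & L2 & N1 & N2 & H1 & H2 & Hlen); auto.
    { intros x Hx; apply HL; simpl; auto. }
    destruct (HL a (or_introl eq_refl)) as [Ha|Hb].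
    + exists (a :: L1), L2. split; [|split; [|split; [|split]]]; auto.
      * constructor; auto. intro Hin. apply Hnot, (H1 a Hin).
      * intros x [<-|Hx]; simpl; [auto | split; [|right]; apply (H1 x Hx)].
      * intros x Hx; simpl; split; [|right]; apply (H2 x Hx).
      * simpl; lia.
    + exists L1, (a :: L2). split; [|split; [|split; [|split]]]; auto.
      * constructor; auto. intro Hin. apply Hnot, (H2 a Hin).
      * intros x Hx; simpl; split; [|right]; apply (H1 x Hx).
      * intros x [<-|Hx]; simpl; [auto | split; [|right]; apply (H2 x Hx)].
      * simpl; lia.
Qed.

Lemma card_le_union {X} (A B : X -> Prop) (a b : R) :
  card_le A a -> card_le B b -> card_le (fun x => A x \/ B x) (a + b).
Proof.
  intros HA HB L HL HLAB.
  destruct (split_list A B L HL HLAB) as (L1 & L2 & N1 & N2 & H1 & H2 & Hlen).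
  rewrite Hlen, plus_INR. apply Rplus_le_compat.
  - apply HA; auto. intros x Hx; apply H1; auto.
  - apply HB; auto. intros x Hx; apply H2; auto.
Qed.

Lemma card_le_big_union {X} (P : X -> X -> Prop) (L : list X) (c : R) :
  (forall u, In u L -> card_le (P u) c) ->
  card_le (fun x => exists u, In u L /\ P u x) (c * INR (length L)).
Proof.
  induction L as [|a L IH]; intros H.
  - intros L' HL' HA. destruct L' as [|y L''].
    + simpl. lra.
    + destruct (HA y (or_introl eq_refl)) as (u & [] & _).
  - replace (c * INR (length (a :: L))) with (c + c * INR (length L))
      by (simpl length; rewrite S_INR; ring).
    eapply card_le_mono.
    2: { apply card_le_union.
         - apply (H a (or_introl eq_refl)).
         - apply IH. intros u Hu; apply H; simpl; auto. }
    intros x (u & [<-|Hu] & Hp); [left | right; exists u]; auto.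
Qed.

Lemma finite_enum {X} (A : X -> Prop) (n : nat) :
  card_le A (INR n) -> exists E, NoDup E /\ forall x, In x E <-> A x.
Proof.
  intros HA.
  assert (Grow : forall m, (exists L, NoDup L /\ (forall x, In x L -> A x) /\ length L = m)
     \/ (exists E, NoDup E /\ forall x, In x E <-> A x)).
  { induction m as [|m IH].
    - left. exists []. split; [constructor|]. split; [intros x []|reflexivity].
    - destruct IH as [(L & HL & HLA & Hlen)|Hdone]; [|right; exact Hdone].
      destruct (classic (forall x, A x -> In x L)) as [Hall|Hmiss].
      + right. exists L. split; auto. intro x; split; auto.
      + left. apply not_all_ex_not in Hmiss. destruct Hmiss as [x Hx].
        apply imply_to_and in Hx. destruct Hx as [Ax Nx].
        exists (x :: L). split; [constructor; auto|]. split.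
        * intros y [<-|Hy]; auto.
        * simpl; lia. }
  destruct (Grow (S n)) as [(L & HL & HLA & Hlen)|Hdone]; auto.
  exfalso. pose proof (HA L HL HLA) as H. rewrite Hlen, S_INR in H. lra.
Qed.

Lemma nodup_exists {X} (L : list X) : exists L', NoDup L' /\ forall x, In x L' <-> In x L.
Proof.
  induction L as [|a L (L' & HN & HL)].
  - exists []. split; [constructor | tauto].
  - destruct (classic (In a L')) as [Ha|Ha].
    + exists L'. split; auto. intro x; simpl; rewrite <- HL. split; [auto|].
      intros [<-|Hx]; auto.
    + exists (a :: L'). split; [constructor; auto|]. intro x; simpl; rewrite HL; tauto.
Qed.

Lemma length_incl {X} (A B : list X) :
  NoDup A -> (forall x, In x A -> In x B) -> INR (length A) <= INR (length B).
Proof. intros HA Hinc. apply le_INR, NoDup_incl_length; auto. Qed.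

Lemma exponent_exists (C eps : R) : 0 < eps -> exists J : nat, C < eps * (1 + eps) ^ J.
Proof.
  intros Heps.
  destruct (Pow_x_infinity (1 + eps) ltac:(rewrite Rabs_pos_eq; lra) (C / eps + 1))
    as [J HJ].
  exists J. specialize (HJ J (Nat.le_refl J)).
  rewrite Rabs_pos_eq in HJ by (apply pow_le; lra).
  apply (Rmult_lt_reg_l (/ eps)); [apply Rinv_0_lt_compat; lra|].
  rewrite <- Rmult_assoc, Rinv_l, Rmult_1_l by lra. unfold Rdiv in HJ. lra.
Qed.

Lemma geometric_growth (q : R) (b : nat -> R) (J : nat) :
  0 <= q -> 0 <= b O -> (forall j, (j < J)%nat -> q * b j < b (S j)) -> q ^ J * b O <= b J.
Proof.
  intros Hq Hb0 Hstep.
  assert (H : forall j, (j <= J)%nat -> q ^ j * b O <= b j).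
  { induction j as [|j IH]; intros Hj; [simpl; lra|].
    specialize (IH ltac:(lia)). specialize (Hstep j ltac:(lia)).
    assert (0 <= q ^ j) by (apply pow_le; lra). simpl. nra. }
  apply H; lia.
Qed.

(* The final count of the tiling case: the r-neighbourhood of M (at most N0 |M|
   points) is absorbed by the Følner part U, because |M| <= b0 and
   (1+eps)^J b0 <= |E_J| <= N1 |U|. *)
Lemma hull_arith (eps N0 N1 P b0 bJ m u f : R) :
  0 < eps -> 0 <= N0 -> 0 <= N1 -> 0 <= m ->
  2 * N0 * N1 < eps * P -> P * b0 <= bJ -> bJ <= N1 * u ->
  1 <= b0 -> m <= b0 -> u <= f ->
  N0 * m + eps / 2 * u <= eps * f.
Proof.
  intros Heps HN0 HN1 Hm HJ Hgrow Hcover Hb0 Hmb Huf.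
  assert (HP : 0 < P) by nra.
  assert (HN1u : 0 < N1 * u) by (pose proof (Rmult_lt_0_compat P b0 HP ltac:(lra)); lra).
  assert (HN1pos : 0 < N1).
  { destruct (Req_dec N1 0) as [HN1z|HN1z]; [rewrite HN1z, Rmult_0_l in HN1u|]; lra. }
  assert (Hkey : 2 * N0 * b0 < eps * u).
  { apply (Rmult_lt_reg_l N1); auto. nra. }
  nra.
Qed.

Section ExtendedDistances.
Context {X : Type} {d : X -> X -> option R}.

Lemma ele_mono (v : option R) (a b : R) : a <= b -> ele v a -> ele v b.
Proof. destruct v; simpl; auto; lra. Qed.

Lemma dist_le_of_ele (x : X) (A : X -> Prop) (a : X) (t : R) :
  A a -> ele (d x a) t -> dist_le d x A t.
Proof.
  intros Ha Hd e He. exists a. split; auto. destruct (d x a); simpl in *; auto; lra.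
Qed.

Lemma dist_le_attained (x : X) (L : list X) (t : R) :
  dist_le d x (fun y => In y L) t -> exists a, In a L /\ ele (d x a) t.
Proof.
  intros H. apply NNPP; intro Hn.
  assert (Gap : exists e, 0 < e /\ forall a, In a L -> ~ elt (d x a) (t + e)).
  { clear H. induction L as [|b L IH].
    - exists 1; split; [lra | intros a []].
    - destruct IH as (e & He & Hall).
      { intros (a & Ha & Hd); apply Hn; exists a; split; simpl; auto. }
      destruct (d x b) as [v|] eqn:Hb.
      + assert (Hvt : t < v).
        { destruct (Rle_lt_dec v t) as [Hle|Hlt]; auto. exfalso; apply Hn.
          exists b; split; simpl; auto. rewrite Hb; simpl; auto. }
        exists (Rmin e (v - t)). split; [apply Rmin_glb_lt; lra|].
        pose proof (Rmin_l e (v - t)). pose proof (Rmin_r e (v - t)).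
        intros a [<-|Ha].
        * rewrite Hb; simpl. lra.
        * intro Hc. apply (Hall a Ha). destruct (d x a); simpl in *; auto. lra.
      + exists e; split; auto. intros a [<-|Ha].
        * rewrite Hb; simpl; auto.
        * apply Hall; auto. }
  destruct Gap as (e & He & Hall). destruct (H e He) as (a & Ha & Hd).
  apply (Hall a Ha Hd).
Qed.

Hypothesis Hm : ext_metric X d.

Lemma ele_tri (x y z : X) (a b : R) :
  ele (d x y) a -> ele (d y z) b -> ele (d x z) (a + b).
Proof.
  intros H1 H2. pose proof (em_tri _ _ Hm x y z) as T.
  destruct (d x y) as [u|]; [|destruct H1].
  destruct (d y z) as [v|]; [|destruct H2].
  simpl in *. destruct (d x z); simpl in *; lra.
Qed.

Lemma ele_sym (x y : X) (a : R) : ele (d x y) a -> ele (d y x) a.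
Proof. rewrite (em_sym _ _ Hm). auto. Qed.

Lemma ele_refl (x : X) (a : R) : 0 <= a -> ele (d x x) a.
Proof. rewrite (em_refl _ _ Hm). simpl. auto. Qed.

End ExtendedDistances.

Definition near {X} (d : X -> X -> option R) (A : list X) (t : R) (x : X) : Prop :=
  exists a, In a A /\ ele (d x a) t.

Section Neighbourhoods.
Context {X : Type} {d : X -> X -> option R}.
Hypothesis Hm : ext_metric X d.

Lemma near_trans (A B : list X) (s t : R) (x : X) :
  near d A s x -> (forall a, In a A -> near d B t a) -> near d B (s + t) x.
Proof.
  intros (a & Ha & Hxa) HAB. destruct (HAB a Ha) as (b & Hb & Hab).
  exists b. split; auto. eapply ele_tri; eauto.
Qed.

Lemma near_self (A : list X) (t : R) (x : X) : 0 <= t -> In x A -> near d A t x.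
Proof. intros Ht Hx. exists x. split; auto. apply ele_refl; auto. Qed.

Lemma near_card (A : list X) (t : R) (N : nat) :
  (forall x, card_le (closed_ball d x t) (INR N)) ->
  card_le (near d A t) (INR N * INR (length A)).
Proof. intros HN. apply (card_le_big_union (fun a => closed_ball d a t)). auto. Qed.

Lemma near_enum (A : list X) (t : R) :
  unif_loc_finite d -> exists E, NoDup E /\ forall x, In x E <-> near d A t x.
Proof.
  intros Hulf. destruct (Hulf (Rmax t 1)) as [N HN]; [pose proof (Rmax_r t 1); lra|].
  apply (finite_enum _ (N * length A)). rewrite mult_INR.
  eapply card_le_mono; [|apply near_card, HN].
  intros x (a & Ha & Hxa). exists a. split; auto. eapply ele_mono; [apply Rmax_l|exact Hxa].
Qed.

Lemma near_layers (A : list X) (r : R) :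
  unif_loc_finite d -> exists E : nat -> list X,
    forall j, NoDup (E j) /\ forall x, In x (E j) <-> near d A (INR j * r) x.
Proof.
  intros Hulf.
  apply (functional_choice
           (fun j E => NoDup E /\ forall x, In x E <-> near d A (INR j * r) x)).
  intro j. apply near_enum, Hulf.
Qed.

End Neighbourhoods.

Section Boundaries.
Context {X : Type} {d : X -> X -> option R}.
Hypothesis Hm : ext_metric X d.

Lemma outer_boundary_union (A B F : list X) (r : R) (x : X) :
  (forall y, In y F <-> In y A \/ In y B) -> outer_boundary d r F x ->
  (~ In x A /\ near d A r x) \/ outer_boundary d r B x.
Proof.
  intros HF [Hout Hdist]. apply dist_le_attained in Hdist. destruct Hdist as (a & Ha & Hxa).
  apply HF in Ha. destruct Ha as [Ha|Ha].
  - left. split; [intro Hx; apply Hout, HF; auto | exists a; auto].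
  - right. split; [intro Hx; apply Hout, HF; auto | eapply dist_le_of_ele; eauto].
Qed.

Lemma boundary_of_outside (A : list X) (r : R) (x : X) :
  0 <= r -> ~ In x A -> near d A r x -> boundary d r A x.
Proof.
  intros Hr Hx (a & Ha & Hxa). split.
  - eapply dist_le_of_ele; eauto.
  - apply (dist_le_of_ele x (fun y => ~ In y A) x); auto. apply ele_refl; auto.
Qed.

Lemma outer_boundary_card_diff (A B : list X) (r : R) :
  NoDup A -> NoDup B -> (forall x, In x A -> In x B) ->
  (forall x, outer_boundary d r A x -> In x B) ->
  card_le (outer_boundary d r A) (INR (length B) - INR (length A)).
Proof.
  intros HA HB HAB HbdB L HL HLbd.
  assert (Hsub : INR (length (L ++ A)) <= INR (length B)).
  { apply length_incl.
    - apply NoDup_app; auto. intros a Ha Hin. apply (HLbd a Ha). auto.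
    - intros x Hx. apply in_app_or in Hx. destruct Hx as [Hx|Hx]; auto. }
  rewrite length_app, plus_INR in Hsub. lra.
Qed.

Lemma outer_boundary_app_folner (G U : list X) (r eps c : R) :
  0 <= r -> folner d r eps G -> card_le (outer_boundary d r U) c ->
  card_le (outer_boundary d r (G ++ U)) (eps * INR (length G) + c).
Proof.
  intros Hr (_ & _ & HG) HU.
  eapply card_le_mono; [|apply (card_le_union _ _ _ _ HG HU)].
  intros x Hx.
  destruct (outer_boundary_union G U (G ++ U) r x (fun y => in_app_iff G U y) Hx)
    as [[HxG Hnear]|HxU]; [left; apply boundary_of_outside|right]; auto.
Qed.

Lemma outer_boundary_app_near (A B F : list X) (r : R) (N : nat) (c : R) :
  (forall y, In y F <-> In y A \/ In y B) ->
  (forall x, card_le (closed_ball d x r) (INR N)) -> card_le (outer_boundary d r B) c ->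
  card_le (outer_boundary d r F) (INR N * INR (length A) + c).
Proof.
  intros HF HN HB.
  eapply card_le_mono; [|apply (card_le_union _ _ _ _ (near_card A r N HN) HB)].
  intros x Hx. destruct (outer_boundary_union A B F r x HF Hx) as [[_ Hnear]|HxB]; auto.
Qed.

End Boundaries.

Section FolnerTiling.
Context {X : Type} {d : X -> X -> option R}.
Hypothesis Hm : ext_metric X d.
Variables (r eps s : R).
Hypothesis Hr : 0 <= r.
Hypothesis Hfolner :
  forall x, exists G, folner d r eps G /\ (forall y, In y G -> closed_ball d x s y).

Lemma folner_tiling (Y : list X) :
  exists U, NoDup U /\ (forall u, In u U -> near d Y s u) /\
    card_le (outer_boundary d r U) (eps * INR (length U)) /\
    (forall y, In y Y -> near d U s y).
Proof.
  induction Y as [|y Y (U & HU & HUY & HUbd & HYU)].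
  - exists []. split; [constructor|]. split; [intros u []|]. split; [|intros y []].
    intros L HL HLbd. destruct L as [|x L]; [simpl; lra|].
    destruct (HLbd x (or_introl eq_refl)) as [_ Hdist].
    destruct (dist_le_attained _ _ _ Hdist) as (a & [] & _).
  - destruct (classic (near d U s y)) as [Hy|Hy].
    + exists U. split; [auto|]. split; [|split; [auto|]].
      * intros u Hu. destruct (HUY u Hu) as (a & Ha & Hua). exists a. split; simpl; auto.
      * intros y' [<-|Hy']; auto.
    + destruct (Hfolner y) as (G & HG & HGy). destruct HG as (HGnd & HGne & HGbd).
      exists (G ++ U). split; [|split; [|split]].
      * apply NoDup_app; auto. intros a Ha HaU. apply Hy. exists a. split; auto.
        apply ele_sym; auto. apply HGy; auto.
      * intros u Hu. apply in_app_or in Hu. destruct Hu as [Hu|Hu].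
        -- exists y. split; [left; auto | apply HGy; auto].
        -- destruct (HUY u Hu) as (a & Ha & Hua). exists a. split; simpl; auto.
      * rewrite length_app, plus_INR, Rmult_plus_distr_l.
        apply outer_boundary_app_folner; auto. split; auto.
      * intros y' [<-|Hy'].
        -- destruct G as [|g G']; [congruence|]. exists g. split; [left; auto|].
           apply ele_sym; auto. apply HGy; left; auto.
        -- destruct (HYU y' Hy') as (u & Hu & Hyu). exists u. split; auto.
           apply in_or_app; auto.
Qed.

End FolnerTiling.

Definition folner_hull {X} (d : X -> X -> option R) (M : list X) (S r eps : R)
    (F : list X) : Prop :=
  NoDup F /\ (forall x, In x M -> In x F) /\
  (forall x, In x F -> dist_le d x (fun y => In y M) S) /\
  card_le (outer_boundary d r F) (eps * INR (length F)).

Section Hulls.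
Context {X : Type} {d : X -> X -> option R}.
Hypothesis Hm : ext_metric X d.
Variables (M : list X) (r eps : R) (E : nat -> list X).
Hypotheses (Hr : 0 < r) (Heps : 0 < eps).
Hypothesis HE : forall j, NoDup (E j) /\ forall x, In x (E j) <-> near d M (INR j * r) x.

Lemma layer_hull (j : nat) (s : R) :
  INR j * r <= s -> INR (length (E (S j))) <= (1 + eps) * INR (length (E j)) ->
  folner_hull d M s r eps (E j).
Proof.
  intros HjS Hthin. pose proof (pos_INR j) as Hj.
  assert (Hlayer : forall k x, In x (E k) <-> near d M (INR k * r) x) by apply HE.
  assert (Hnested : forall x, In x (E j) -> In x (E (S j))).
  { intros x Hx. apply Hlayer in Hx. destruct Hx as (m & Hm1 & Hm2).
    apply Hlayer. exists m. split; auto. eapply ele_mono; [|exact Hm2]. rewrite S_INR. nra. }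
  split; [apply HE|]. split; [|split].
  - intros x Hx. apply Hlayer, near_self; auto. nra.
  - intros x Hx. apply Hlayer in Hx. destruct Hx as (m & Hm1 & Hm2).
    apply (dist_le_of_ele x _ m); auto. eapply ele_mono; eauto.
  - apply (card_le_weaken _ (INR (length (E (S j))) - INR (length (E j)))); [lra|].
    apply outer_boundary_card_diff; [apply HE | apply HE | exact Hnested |].
    intros x [_ Hdist]. apply dist_le_attained in Hdist. apply Hlayer.
    rewrite S_INR, Rmult_plus_distr_r, Rmult_1_l, Rplus_comm.
    apply (near_trans Hm (E j)); [exact Hdist | intros a Ha; apply Hlayer, Ha].
Qed.

Lemma tiling_hull (N0 N1 : nat) (s : R) (J : nat) :
  M <> [] -> 0 < s ->
  (forall x, card_le (closed_ball d x r) (INR N0)) ->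
  (forall x, card_le (closed_ball d x s) (INR N1)) ->
  (forall x, exists G, folner d r (eps / 2) G /\ (forall y, In y G -> closed_ball d x s y)) ->
  2 * INR N0 * INR N1 < eps * (1 + eps) ^ J ->
  (1 + eps) ^ J * INR (length (E O)) <= INR (length (E J)) ->
  exists F, folner_hull d M (INR J * r + s) r eps F.
Proof.
  intros HM Hs HN0 HN1 Hfolner HJ Hgrowth.
  assert (Hlayer : forall k x, In x (E k) <-> near d M (INR k * r) x) by apply HE.
  destruct (folner_tiling Hm r (eps / 2) s ltac:(lra) Hfolner (E J))
    as (U & HU & HUnear & HUbd & HcoverU).
  destruct (nodup_exists M) as (M' & HM' & HM'M).
  destruct (nodup_exists (M ++ U)) as (F & HF & HFMU).
  assert (HFunion : forall y, In y F <-> In y M' \/ In y U).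
  { intro y. rewrite HFMU, in_app_iff, HM'M. tauto. }
  assert (HM'b : INR (length M') <= INR (length (E O))).
  { apply length_incl; auto. intros x Hx.
    apply Hlayer, (near_self Hm); [simpl; nra | apply HM'M, Hx]. }
  assert (Hb0 : 1 <= INR (length (E O))).
  { destruct M as [|m M0]; [congruence|].
    apply (length_incl [m] (E O)); [repeat constructor; intros []|].
    intros x [<-|[]]. apply Hlayer, (near_self Hm); [simpl; nra | left; auto]. }
  assert (HbJ : INR (length (E J)) <= INR N1 * INR (length U)).
  { apply (near_card U s N1 HN1); [apply HE | exact HcoverU]. }
  assert (HUF : INR (length U) <= INR (length F)).
  { apply length_incl; auto. intros x Hx. apply HFunion; auto. }
  exists F. split; [exact HF|]. split; [|split].
  - intros x Hx. apply HFMU, in_or_app; auto.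
  - intros x Hx. apply HFMU, in_app_or in Hx. destruct Hx as [Hx|Hx].
    + apply (dist_le_of_ele x _ x); auto. apply ele_refl; auto.
      pose proof (pos_INR J). nra.
    + assert (Hnear : near d M (s + INR J * r) x).
      { apply (near_trans Hm (E J)); auto. intros a Ha; apply Hlayer, Ha. }
      destruct Hnear as (m & Hm1 & Hm2). apply (dist_le_of_ele x _ m); auto.
      rewrite Rplus_comm; exact Hm2.
  - eapply card_le_weaken; [|apply (outer_boundary_app_near M' U F r N0 _ HFunion HN0 HUbd)].
    apply (hull_arith eps (INR N0) (INR N1) ((1 + eps) ^ J) (INR (length (E O)))
                      (INR (length (E J)))); auto using pos_INR.
Qed.

End Hulls.

Theorem proposition3p5 (X : Type) (d : X -> X -> option R) :
  ext_metric X d -> ubiq_amenable d -> unif_loc_finite d ->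
  forall r eps, 0 < r -> 0 < eps ->
  exists S, 0 < S /\
    forall M : list X, M <> [] ->
      exists F : list X, NoDup F /\
        (forall x, In x M -> In x F) /\
        (forall x, In x F -> dist_le d x (fun y => In y M) S) /\
        card_le (outer_boundary d r F) (eps * INR (length F)).
Proof.
  intros Hm Hua Hulf r eps Hr Heps.
  destruct (Hulf r Hr) as [N0 HN0].
  destruct (Hua r (eps / 2) Hr ltac:(lra)) as (s & Hs & Hfolner).
  destruct (Hulf s Hs) as [N1 HN1].
  destruct (exponent_exists (2 * INR N0 * INR N1) eps Heps) as [J HJ].
  exists (INR J * r + s). split; [pose proof (pos_INR J); nra|].
  intros M HM.
  destruct (near_layers M r Hulf) as [E HE].
  destruct (classic (exists j, (j < J)%nat /\
                     INR (length (E (S j))) <= (1 + eps) * INR (length (E j))))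
    as [(j & HjJ & Hthin)|Hgrowing].
  - exists (E j). apply (layer_hull Hm M r eps E Hr HE); auto.
    apply lt_INR in HjJ. nra.
  - apply (tiling_hull Hm M r eps E Hr Heps HE N0 N1 s J); auto.
    apply (geometric_growth (1 + eps) (fun j => INR (length (E j)))); [lra | apply pos_INR |].
    intros j Hj. apply Rnot_le_lt. intro Hthin. apply Hgrowing. eauto.
Qed.
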